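(* Let $\{x^k\}$ be generated by Algorithm IRG with the backtracking stepsize rule and $\theta<\mu$, and assume $\rho_k\to0$. Assume $\{x^k\}$ has an accumulation point $\bar x$, $f$ satisfies the KL property at $\bar x$ with $\psi(t)=Mt^q$ for some $M>0$ and $q\in(0,1)$, and $\nabla f$ is Lipschitz continuous on a neighborhood of $\bar x$. Assume $\mathbb N\setminus\mathcal N$ is infinite, enumerate it increasingly as $j_1<j_2<\cdots$, and set $z^k:=x^{j_k}$. Then: (i) if $q\in(0,1/2]$, $\{z^k\}$ converges linearly to $\bar x$, i.e. there exist $C>0$ and $\lambda\in(0,1)$ with $\|z^k-\bar x\|\le C\lambda^k$ for all large $k$; (ii) if $q\in(1/2,1)$, there exists $\varrho>0$ with $\|z^k-\bar x\|\le\varrho k^{-\frac{1-q}{2q-1}}$ for all sufficiently large $k$.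
   Context: Algorithm IRG (general inexact reduced gradient framework). Let $f:\mathbb R^n\to\mathbb R$ be continuously differentiable. Parameters: initial point $x^1\in\mathbb R^n$, initial radii $\varepsilon_1>0$, $r_1>0$, reduction factors $\mu,\theta\in(0,1)$, and a sequence $\{\rho_k\}$ of positive numbers. For $k=1,2,\dots$: (1) choose $g^k\in\mathbb R^n$ with $\|g^k-\nabla f(x^k)\|\le\min\{\varepsilon_k,\rho_k\}$; (2) if $\|g^k\|\le r_k+\varepsilon_k$, set $r_{k+1}=\mu r_k$, $\varepsilon_{k+1}=\theta\varepsilon_k$, $d^k=0$; otherwise set $r_{k+1}=r_k$, $\varepsilon_{k+1}=\varepsilon_k$ and $d^k=-\frac{\|g^k\|-\varepsilon_k}{\|g^k\|}g^k$; (3) choose a stepsize $t_k>0$ by some rule; (4) set $x^{k+1}=x^k+t_kd^k$. The set of null iterations is $\mathcal N:=\{k\in\mathbb N: x^{k+1}=x^k\}$. Backtracking stepsize rule: fix $\beta,\gamma,\tau\in(0,1)$; if $d^k=0$ set $t_k=\tau$; otherwise $t_k=\max\{t\in\{1,\gamma,\gamma^2,\dots\}: f(x^k+td^k)\le f(x^k)-\beta t\|d^k\|^2\}$. KL property with $\psi(t)=Mt^q$: there exist $\eta>0$ and a neighborhood $U$ of $\bar x$ such that $\|\nabla f(x)\|\ge M(f(x)-f(\bar x))^q$ for all $x\in U$ with $f(\bar x)<f(x)<f(\bar x)+\eta$. *)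

From HB Require Import structures.
From mathcomp Require Import all_boot all_order all_algebra.
From mathcomp Require Import all_classical all_reals all_analysis.
Set Implicit Arguments. Unset Strict Implicit. Unset Printing Implicit Defensive.
Import Order.TTheory GRing.Theory Num.Theory.
Import numFieldNormedType.Exports.
Local Open Scope ring_scope.
Local Open Scope classical_set_scope.

Definition dotv {R : realType} {n : nat} (u v : 'rV[R]_n) : R :=
  \sum_(i < n) u ord0 i * v ord0 i.
Definition enorm {R : realType} {n : nat} (v : 'rV[R]_n) : R :=
  Num.sqrt (dotv v v).

Definition C1_with_gradient {R : realType} {n : nat}
  (f : 'rV[R]_n -> R) (gf : 'rV[R]_n -> 'rV[R]_n) : Prop :=
  (forall x, differentiable f x /\ forall h, 'd f x h = dotv (gf x) h)
  /\ continuous gf.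

(* Algorithm IRG with the backtracking stepsize rule; iterations indexed by
   k = 1, 2, ...  (values of the sequences at index 0 are irrelevant). *)
Definition IRG_backtracking {R : realType} {n : nat}
  (f : 'rV[R]_n -> R) (gf : 'rV[R]_n -> 'rV[R]_n)
  (mu theta beta gamma tau : R) (rho : nat -> R)
  (x g d : nat -> 'rV[R]_n) (eps r t : nat -> R) : Prop :=
  [/\ (0 < eps 1%N) && (0 < r 1%N),
      (0 < mu < 1) && (0 < theta < 1),
      [&& 0 < beta < 1, 0 < gamma < 1 & 0 < tau < 1],
      (forall k, (1 <= k)%N -> 0 < rho k) &
      forall k, (1 <= k)%N ->
        [/\ enorm (g k - gf (x k)) <= Num.min (eps k) (rho k),
            (if enorm (g k) <= r k + eps k then
               [/\ r k.+1 = mu * r k, eps k.+1 = theta * eps k,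
                   d k = 0 & t k = tau]
             else
               [/\ r k.+1 = r k, eps k.+1 = eps k,
                   d k = - ((enorm (g k) - eps k) / enorm (g k)) *: g k &
                   (* t k = max { t in {1, gamma, gamma^2, ...} :
                        f (x k + t d k) <= f (x k) - beta t ||d k||^2 } *)
                   exists i : nat,
                     [/\ t k = gamma ^+ i,
                         f (x k + t k *: d k) <= f (x k) - beta * t k * enorm (d k) ^+ 2 &
                         forall i', (i' < i)%N ->
                           ~ (f (x k + gamma ^+ i' *: d k)
                                <= f (x k) - beta * gamma ^+ i' * enorm (d k) ^+ 2)]])
          & x k.+1 = x k + t k *: d k]].

From HB Require Import structures.
From mathcomp Require Import all_boot all_order all_algebra.
From mathcomp Require Import all_classical all_reals all_analysis.
From mathcomp Require Import ring lra zify.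
Import Order.TTheory GRing.Theory Num.Theory.
Import numFieldNormedType.Exports.
Local Open Scope ring_scope.
Local Open Scope classical_set_scope.

(* Along a nonnull iteration the direction satisfies <gf (x k), d k> <= - |d k|^2 and
   |gf (x k)| <= K |d k|, where K stays bounded because theta < mu keeps eps k / r k
   bounded; the Armijo rule gives f (x k.+1) <= f (x k) - beta t k |d k|^2, and near xbar
   the Lipschitz gradient keeps t k bounded below.  With e k = f (x k) - f xbar and
   Phi s = c s^(1-q), concavity of Phi and the KL inequality give
   |x k.+1 - x k| <= Phi (e k) - Phi (e k.+1).  Started close enough to xbar, this traps
   the iterates near xbar and yields |x k - xbar| <= Phi (e k).  Along the nonnull
   iterations e k.+1 <= e k - c' e k^(2q), which makes e k^(1-q) decay geometrically when
   q <= 1/2 and like k^(-(1-q)/(2q-1)) when q > 1/2. *)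

Section Euclidean.
Context {R : realType} {n : nat}.
Implicit Types u v w : 'rV[R]_n.

Lemma dotvC u v : dotv u v = dotv v u.
Proof. by apply: eq_bigr => i _; rewrite mulrC. Qed.

Lemma dotvDl u v w : dotv (u + v) w = dotv u w + dotv v w.
Proof. by rewrite /dotv -big_split; apply: eq_bigr => i _; rewrite !mxE mulrDl. Qed.

Lemma dotvZl a u w : dotv (a *: u) w = a * dotv u w.
Proof. by rewrite /dotv mulr_sumr; apply: eq_bigr => i _; rewrite !mxE mulrA. Qed.

Lemma dotvNl u w : dotv (- u) w = - dotv u w.
Proof. by rewrite -scaleN1r dotvZl mulN1r. Qed.

Lemma dotvBl u v w : dotv (u - v) w = dotv u w - dotv v w.
Proof. by rewrite dotvDl dotvNl. Qed.

Lemma dotvDr u v w : dotv w (u + v) = dotv w u + dotv w v.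
Proof. by rewrite !(dotvC w) dotvDl. Qed.

Lemma dotvZr a u w : dotv w (a *: u) = a * dotv w u.
Proof. by rewrite !(dotvC w) dotvZl. Qed.

Lemma dotvBr u v w : dotv w (u - v) = dotv w u - dotv w v.
Proof. by rewrite !(dotvC w) dotvBl. Qed.

Lemma dotv0l u : dotv 0 u = 0.
Proof. by rewrite /dotv big1 // => i _; rewrite mxE mul0r. Qed.

Lemma dotvv_ge0 u : 0 <= dotv u u.
Proof. by apply: sumr_ge0 => i _; rewrite -expr2 sqr_ge0. Qed.

Lemma dotvv_eq0 u : dotv u u = 0 -> u = 0.
Proof.
move=> /eqP; rewrite psumr_eq0 => [/allP u0|i _]; last by rewrite -expr2 sqr_ge0.
apply/rowP => i; rewrite mxE; apply/eqP.
by have := u0 i (mem_index_enum _); rewrite -expr2 sqrf_eq0.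
Qed.

Lemma enorm_ge0 u : 0 <= enorm u.
Proof. exact: sqrtr_ge0. Qed.

Lemma enorm_sqr u : enorm u ^+ 2 = dotv u u.
Proof. by rewrite /enorm sqr_sqrtr // dotvv_ge0. Qed.

Lemma enorm0 : enorm (0 : 'rV[R]_n) = 0.
Proof. by rewrite /enorm dotv0l sqrtr0. Qed.

Lemma enorm_eq0 u : enorm u = 0 -> u = 0.
Proof. by move=> u0; apply: dotvv_eq0; rewrite -enorm_sqr u0 expr0n. Qed.

Lemma enormZ a u : enorm (a *: u) = `|a| * enorm u.
Proof.
by rewrite /enorm dotvZl dotvZr mulrA -expr2 sqrtrM ?sqr_ge0 // sqrtr_sqr.
Qed.

Lemma enormN u : enorm (- u) = enorm u.
Proof. by rewrite -scaleN1r enormZ normrN normr1 mul1r. Qed.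

Lemma enorm_distC u v : enorm (u - v) = enorm (v - u).
Proof. by rewrite -enormN opprB. Qed.

Lemma dotv_le_enorm u v : dotv u v <= enorm u * enorm v.
Proof.
set a := enorm u; set b := enorm v.
have [a0|an0] := eqVneq a 0; first by rewrite (enorm_eq0 _ a0) dotv0l a0 mul0r.
have [b0|bn0] := eqVneq b 0.
  by rewrite (enorm_eq0 _ b0) dotvC dotv0l b0 mulr0.
have a_gt0 : 0 < a by rewrite lt_def an0 enorm_ge0.
have b_gt0 : 0 < b by rewrite lt_def bn0 enorm_ge0.
(* expand 0 <= <b u - a v, b u - a v> *)
have := dotvv_ge0 (b *: u - a *: v).
rewrite dotvBl !dotvBr !dotvZl !dotvZr -!enorm_sqr -/a -/b (dotvC v u) => H.
have : a * b * dotv u v <= a * b * (a * b) by nra.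
by rewrite ler_pM2l ?mulr_gt0.
Qed.

Lemma enormD u v : enorm (u + v) <= enorm u + enorm v.
Proof.
rewrite -(ler_pXn2r (n:=2)) // ?nnegrE ?addr_ge0 ?enorm_ge0 //.
rewrite enorm_sqr dotvDl !dotvDr -!enorm_sqr (dotvC v u).
have := dotv_le_enorm u v; nra.
Qed.

Lemma enormB u v : enorm (u - v) <= enorm u + enorm v.
Proof. by rewrite -(enormN v) enormD. Qed.

Lemma enorm_split u v w : enorm (u - w) <= enorm (u - v) + enorm (v - w).
Proof. by rewrite -(subrKA v) enormD. Qed.

Lemma normr_le_enorm u : `|u| <= enorm u.
Proof.
rewrite /Num.Def.normr /= mx_normrE; apply: bigmax_le => [|[i k] _ /=].
  exact: enorm_ge0.
rewrite (ord1 i) -(ler_pXn2r (n:=2)) // ?nnegrE ?enorm_ge0 //.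
rewrite enorm_sqr real_normK ?num_real // /dotv (bigD1 k) //= expr2 lerDl.
by apply: sumr_ge0 => l _; rewrite -expr2 sqr_ge0.
Qed.

Lemma nbhs_enorm (a : 'rV[R]_n) (U : set 'rV[R]_n) : nbhs a U ->
  exists2 e : R, 0 < e & forall y, enorm (y - a) < e -> U y.
Proof.
move=> /nbhs_ballP [e e0 aeU]; exists e => // y ye; apply: aeU.
rewrite -ball_normE /ball_ /=.
by apply: le_lt_trans ye; rewrite -enormN opprB normr_le_enorm.
Qed.

Lemma continuous_enorm (h : 'rV[R]_n -> R) a : {for a, continuous h} ->
  forall e : R, 0 < e -> exists2 dl : R, 0 < dl &
    forall y, enorm (y - a) < dl -> `|h a - h y| < e.
Proof.
by move=> /cvgrPdist_lt hcont e e0; have /nbhs_enorm[dl dl0 hd] := hcont e e0; exists dl.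
Qed.

End Euclidean.

Section Descent.
Context {R : realType} {n : nat} {f : 'rV[R]_n -> R} {gf : 'rV[R]_n -> 'rV[R]_n}.
Hypothesis f_grad : forall x, differentiable f x /\ forall h, 'd f x h = dotv (gf x) h.

Lemma is_derive_line x d (u : R) :
  is_derive u 1 (fun s => f (x + s *: d)) (dotv (gf (x + u *: d)) d).
Proof.
have E : (fun h : R => h^-1 *: (((fun s => f (x + s *: d)) \o shift u) (h *: 1)
              - f (x + u *: d))) =
         (fun h : R => h^-1 *: ((f \o shift (x + u *: d)) (h *: d) - f (x + u *: d))).
  apply: funext => h /=; congr (_ *: (f _ - _)).
  by rewrite scalerDl [h *: 1]mulr1 addrCA addrA.
have fdiff := proj1 (f_grad (x + u *: d)).
split; first by rewrite /derivable E; exact: diff_derivable.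
by rewrite /derive E -/(derive f (x + u *: d) d) deriveE // (proj2 (f_grad _)).
Qed.

Lemma descent_lemma x d (s L : R) : 0 <= s -> 0 <= L ->
  (forall u : R, 0 <= u <= s -> enorm (gf (x + u *: d) - gf x) <= L * (u * enorm d)) ->
  f (x + s *: d) <= f x + s * dotv (gf x) d + L * s ^+ 2 * enorm d ^+ 2.
Proof.
move=> s0 L0 gfLip.
have [c] : exists2 c, c \in `[0, s]%R &
    f (x + s *: d) - f (x + 0 *: d) = dotv (gf (x + c *: d)) d * (s - 0).
  apply: (@MVT_segment R (fun s => f (x + s *: d)) (fun u => dotv (gf (x + u *: d)) d))
    => // [u _|]; first exact: is_derive_line.
  apply: continuous_subspaceT => u; apply: differentiable_continuous.
  by apply/derivable1_diffP; have [] := is_derive_line x d u.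
rewrite in_itv /= => /andP [c0 cs]; rewrite scale0r addr0 subr0 => mvt.
have -> : f (x + s *: d) = f x + dotv (gf (x + c *: d)) d * s.
  by rewrite -mvt addrC subrKC.
rewrite -[gf (x + c *: d)](subrK (gf x)) dotvDl.
have dgf : dotv (gf (x + c *: d) - gf x) d <= L * s * enorm d ^+ 2.
  apply: le_trans (dotv_le_enorm _ _) _.
  apply: le_trans (ler_wpM2r (enorm_ge0 d) (gfLip c _)) _; first by rewrite c0.
  by rewrite expr2 !mulrA !ler_wpM2r ?enorm_ge0 // ler_wpM2l.
have := ler_wpM2r s0 dgf; nra.
Qed.

End Descent.

Section RealInequalities.
Context {R : realType}.

Lemma powR_le_affine {al u : R} : 0 < al < 1 -> 0 <= u ->
  u `^ al <= al * u + (1 - al).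
Proof.
move=> /andP[a0 a1] u0.
have p0 : 0 < al^-1 by rewrite invr_gt0.
have q0 : 0 < (1 - al)^-1 by rewrite invr_gt0 subr_gt0.
(* Young's inequality with the conjugate exponents 1/al and 1/(1 - al) *)
have := conjugate_powR (powR_ge0 u al) ler01 p0 q0.
rewrite !invrK subrKC mulr1 -powRrM mulfV ?gt_eqF // powRr1 // powR1 => /(_ erefl).
by rewrite mul1r mulrC.
Qed.

Lemma powR_concave_tangent {al a b : R} : 0 < al < 1 -> 0 < a -> 0 <= b ->
  al * a `^ (al - 1) * (a - b) <= a `^ al - b `^ al.
Proof.
move=> al01 a0 b0; have /andP[al0 _] := al01; set u := b / a.
have u0 : 0 <= u by rewrite divr_ge0 // ltW.
have -> : b = a * u by rewrite /u mulrC divfK ?gt_eqF.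
have aal : a `^ (al - 1) * a = a `^ al by rewrite mulrC mulr_powRB1 // ltW.
have := powR_le_affine al01 u0.
have apos : 0 < a `^ al by rewrite powR_gt0.
rewrite powRM ?(ltW a0) // => /(ler_wpM2l (ltW apos)).
have -> : al * a `^ (al - 1) * (a - a * u) = al * a `^ al * (1 - u) by rewrite -aal; ring.
lra.
Qed.

Lemma powRN_convex_tangent {p a b : R} : 0 < p -> 0 < a -> 0 < b ->
  a `^ (- p) + p * a `^ (- p - 1) * (a - b) <= b `^ (- p).
Proof.
move=> p0 a0 b0; set u := b / a.
have u0 : 0 < u by rewrite divr_gt0.
have -> : b = a * u by rewrite /u mulrC divfK ?gt_eqF.
have apa : a `^ (- p - 1) * a = a `^ (- p).
  rewrite -{2}(powRr1 (ltW a0)) -powRD ?subrK //.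
  by apply/implyP => _; rewrite gt_eqF.
have Hu : 1 - p * (u - 1) <= u `^ (- p).
  rewrite /powR gt_eqF //; apply: le_trans (expR_ge1Dx _).
  have : ln u <= u - 1 by have := @le_ln1Dx R (u - 1); rewrite subrKC; apply; lra.
  nra.
have apos : 0 < a `^ (- p) by rewrite powR_gt0.
rewrite powRM ?(ltW a0) ?(ltW u0) //.
have -> : p * a `^ (- p - 1) * (a - a * u) = - p * a `^ (- p) * (u - 1).
  by rewrite -apa; ring.
have := ler_wpM2l (ltW apos) Hu; nra.
Qed.

Lemma powRN_antitone (s u v : R) : 0 < s -> 0 < u -> u <= v ->
  v `^ (- s) <= u `^ (- s).
Proof.
move=> s0 u0 uv; have v0 : 0 < v by apply: lt_le_trans uv.
rewrite !powRN lef_pV2 ?posrE ?powR_gt0 //.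
by apply: ge0_ler_powR; rewrite // ?nnegrE ltW.
Qed.

Lemma nat_ind_ge (P : nat -> Prop) N : P N -> (forall k, (N <= k)%N -> P k -> P k.+1) ->
  forall k, (N <= k)%N -> P k.
Proof.
move=> PN PS; elim=> [|k IH]; first by rewrite leqn0 => /eqP <-.
by rewrite leq_eqVlt => /orP [/eqP <- //|Nk]; apply: PS => //; exact: IH.
Qed.

End RealInequalities.

(** * Rates for the recursion e_(k+1) <= e_k - c e_k^(2q) *)

Section Rates.
Context {R : realType}.

Definition KL_recursion (E : nat -> R) (c q : R) (N : nat) :=
  forall k, (N <= k)%N -> [/\ 0 < E k, E k < 1 & E k.+1 <= E k - c * E k `^ (2 * q)].

Lemma KL_recursion_linear {E : nat -> R} {c q : R} {N : nat} :
  0 < c -> 0 < q -> q <= 1/2 -> KL_recursion E c q N ->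
  exists C lam : R, 0 < C /\ 0 < lam < 1 /\
    forall k, (N <= k)%N -> E k `^ (1 - q) <= C * lam ^+ k.
Proof.
move=> c0 q0 qh HE; set a := 1 - c.
(* since E k < 1 and 2q <= 1, E k <= E k ^ (2q): the decrease is geometric *)
have Ea : forall k, (N <= k)%N -> E k.+1 <= a * E k.
  move=> k Nk; have [e0 e1 er] := HE k Nk.
  have : E k <= E k `^ (2 * q) by apply: ger1_powR; [rewrite e0 ltW | lra].
  have := ltW c0; rewrite /a; nra.
have [EN0 _ _] := HE N (leqnn N).
have [EN10 _ _] := HE N.+1 (leqnSn N).
have a0 : 0 < a by rewrite -(pmulr_lgt0 _ EN0); apply: lt_le_trans EN10 (Ea N _).
have a1 : a < 1 by rewrite /a; lra.
set C := E N / a ^+ N.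
have C0 : 0 < C by rewrite divr_gt0 // exprn_gt0.
have EC : forall k, (N <= k)%N -> E k <= C * a ^+ k.
  apply: nat_ind_ge; first by rewrite /C divfK // gt_eqF // exprn_gt0.
  by move=> k Nk IH; apply: le_trans (Ea k Nk) _; rewrite exprS mulrCA ler_pM2l.
have q1 : 0 <= 1 - q by lra.
exists (C `^ (1 - q)), (a `^ (1 - q)); split; first by rewrite powR_gt0.
split.
  rewrite powR_gt0 //=.
  have := gt0_ltr_powR (_ : 0 < 1 - q) (_ : a \in Num.nneg) (_ : 1 \in Num.nneg) a1.
  by rewrite powR1 !nnegrE; apply => //; [lra | exact: ltW].
move=> k Nk; have [Ek0 _ _] := HE k Nk.
apply: le_trans (_ : (C * a ^+ k) `^ (1 - q) <= _).
  apply: ge0_ler_powR; rewrite ?nnegrE ?EC ?(ltW Ek0) //.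
  by rewrite mulr_ge0 ?exprn_ge0 ?ltW.
rewrite powRM ?exprn_ge0 ?(ltW C0) ?(ltW a0) //.
by rewrite -(@powR_mulrn _ a k (ltW a0)) powRAC powR_mulrn ?powR_ge0.
Qed.

Lemma KL_recursion_sublinear {E : nat -> R} {c q : R} {N : nat} :
  0 < c -> 1/2 < q -> q < 1 -> KL_recursion E c q N ->
  exists vr : R, 0 < vr /\ exists N', forall k, (N' <= k)%N ->
    E k `^ (1 - q) <= vr * (k%:R) `^ (- ((1 - q) / (2 * q - 1))).
Proof.
move=> c0 qh q1 HE; set p := 2 * q - 1.
have p0 : 0 < p by rewrite /p; lra.
(* by convexity of s ^ (-p), the sequence E k ^ (-p) grows at least by p c per step *)
have Es : forall k, (N <= k)%N -> E k `^ (- p) + p * c <= E k.+1 `^ (- p).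
  move=> k Nk; have [e0 _ er] := HE k Nk; have [e10 _ _] := HE k.+1 (leqW Nk).
  apply: le_trans (powRN_convex_tangent p0 e0 e10).
  rewrite lerD2l -mulrA ler_pM2l //.
  have E0 : E k `^ (- p - 1) * E k `^ (2 * q) = 1.
    rewrite -powRD; last by apply/implyP => _; rewrite gt_eqF.
    by rewrite /p (_ : _ + _ = 0) ?powRr0 //; ring.
  have P0 : 0 < E k `^ (- p - 1) by rewrite powR_gt0.
  have : c * E k `^ (2 * q) <= E k - E k.+1 by lra.
  by move/(ler_wpM2l (ltW P0)); rewrite mulrCA E0 mulr1.
have EN : forall k, (N <= k)%N -> p * c * (k - N)%:R <= E k `^ (- p).
  apply: nat_ind_ge; first by rewrite subnn mulr0 powR_ge0.
  move=> k Nk IH; apply: le_trans (Es k Nk).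
  by rewrite subSn // mulrS mulrDr mulr1 addrC lerD2r.
set A := p * c / 2.
have A0 : 0 < A by rewrite divr_gt0 // mulr_gt0.
set s := (1 - q) / p.
have s0 : 0 < s by rewrite divr_gt0 //; lra.
exists (A `^ (- s)); split; first by rewrite powR_gt0.
exists (2 * N).+1 => k Nk.
have k0 : 0 < k%:R :> R by rewrite ltr0n; apply: leq_trans Nk.
have Nk' : (N <= k)%N by lia.
have [Ek0 _ _] := HE k Nk'.
have Ak : A * k%:R <= E k `^ (- p).
  apply: le_trans (EN k Nk').
  rewrite /A -mulrA ler_pM2l ?mulr_gt0 // natrB; last by lia.
  have : (2 * N <= k)%N by lia.
  rewrite -(ler_nat R) natrM; lra.
have -> : E k `^ (1 - q) = (E k `^ (- p)) `^ (- s).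
  by rewrite -powRrM /s mulNr mulrN opprK mulrC divfK // gt_eqF.
rewrite -powRM ?(ltW A0) ?(ltW k0) //.
by apply: powRN_antitone => //; rewrite mulr_gt0.
Qed.

End Rates.

(** * Iterations of Algorithm IRG with backtracking *)

Section IRGBacktracking.
Context {R : realType} {n : nat} {f : 'rV[R]_n -> R} {gf : 'rV[R]_n -> 'rV[R]_n}
  {mu theta beta gamma tau : R} {rho : nat -> R}
  {x g d : nat -> 'rV[R]_n} {eps r t : nat -> R}.
Hypothesis f_grad : forall y, differentiable f y /\ forall h, 'd f y h = dotv (gf y) h.
Hypothesis irg : IRG_backtracking f gf mu theta beta gamma tau rho x g d eps r t.
Hypothesis theta_lt_mu : theta < mu.

Let eps1_gt0 : 0 < eps 1%N. Proof. by case: irg => /andP[]. Qed.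
Let r1_gt0 : 0 < r 1%N. Proof. by case: irg => /andP[]. Qed.
Let mu_gt0 : 0 < mu. Proof. by case: irg => _ /andP[/andP[]]. Qed.
Let theta_gt0 : 0 < theta. Proof. by case: irg => _ /andP[_ /andP[]]. Qed.
Let beta_gt0 : 0 < beta. Proof. by case: irg => _ _ /and3P[/andP[]]. Qed.
Let beta_lt1 : beta < 1. Proof. by case: irg => _ _ /and3P[/andP[]]. Qed.
Let gamma_gt0 : 0 < gamma. Proof. by case: irg => _ _ /and3P[_ /andP[]]. Qed.
Let gamma_lt1 : gamma < 1. Proof. by case: irg => _ _ /and3P[_ /andP[]]. Qed.

(* a null step shrinks eps by theta < mu, faster than r *)
Lemma eps_r_bounds k : (1 <= k)%N -> [/\ 0 < eps k, 0 < r k & eps k * r 1%N <= eps 1%N * r k].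
Proof.
move: k; apply: nat_ind_ge => [|k k1 [e0 r0 er]]; first by split.
case: irg => _ _ _ _ /(_ k k1) [_ + _]; case: ifP => _ [-> -> _ _]; last by split.
split; rewrite ?mulr_gt0 //.
rewrite -mulrA (mulrCA (eps 1%N)).
apply: le_trans (_ : mu * (eps k * r 1%N) <= _); last by rewrite ler_pM2l.
by rewrite ler_pM2r ?mulr_gt0 // ltW.
Qed.

Lemma nonnull_step k : (1 <= k)%N -> x k.+1 != x k ->
  [/\ r k + eps k < enorm (g k), enorm (g k - gf (x k)) <= eps k,
      d k = - ((enorm (g k) - eps k) / enorm (g k)) *: g k,
      exists i : nat,
        [/\ t k = gamma ^+ i,
            f (x k + t k *: d k) <= f (x k) - beta * t k * enorm (d k) ^+ 2 &
            forall i', (i' < i)%N ->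
              ~ (f (x k + gamma ^+ i' *: d k)
                   <= f (x k) - beta * gamma ^+ i' * enorm (d k) ^+ 2)]
      & x k.+1 = x k + t k *: d k].
Proof.
move=> k1 xk; case: irg => _ _ _ _ /(_ k k1) [gk + xk1].
have gkeps : enorm (g k - gf (x k)) <= eps k by apply: le_trans gk _; rewrite ge_min lexx.
case: ifP => [_ [_ _ dk _]|]; first by rewrite xk1 dk scaler0 addr0 eqxx in xk.
by move=> /negbT; rewrite -ltNge => gr [_ _ dk ti].
Qed.

Lemma enorm_dir_nonnull k : (1 <= k)%N -> x k.+1 != x k ->
  enorm (d k) = enorm (g k) - eps k /\ r k < enorm (d k).
Proof.
move=> k1 xk; have [gr _ dk _ _] := nonnull_step k k1 xk.
have [e0 r0 _] := eps_r_bounds k k1.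
have epsg : eps k < enorm (g k) by apply: lt_trans gr; rewrite ltrDr.
have g0 : 0 < enorm (g k) by apply: lt_trans epsg.
have -> : enorm (d k) = enorm (g k) - eps k.
  rewrite dk enormZ normrN ger0_norm ?divfK ?gt_eqF //.
  by rewrite divr_ge0 ?subr_ge0 ?ltW.
by split => //; lra.
Qed.

Definition K_grad := 1 + 2 * (eps 1%N / r 1%N).

Lemma K_grad_ge1 : 1 <= K_grad.
Proof. by rewrite /K_grad lerDl mulr_ge0 // divr_ge0 // ltW. Qed.

Lemma enorm_grad_le_dir k : (1 <= k)%N -> x k.+1 != x k ->
  enorm (gf (x k)) <= K_grad * enorm (d k).
Proof.
move=> k1 xk; have [gr geps _ _ _] := nonnull_step k k1 xk.
have [-> _] := enorm_dir_nonnull k k1 xk.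
have [e0 r0 er] := eps_r_bounds k k1.
have gfg : enorm (gf (x k)) <= enorm (g k) + eps k.
  rewrite -[gf (x k)](subKr (g k)); apply: le_trans (enormB _ _) _.
  by rewrite lerD2l.
apply: le_trans gfg _; rewrite /K_grad.
set kap := eps 1%N / r 1%N.
have kap0 : 0 <= kap by rewrite divr_ge0 // ltW.
have : eps k <= kap * r k by rewrite /kap mulrAC ler_pdivlMr // mulrC.
nra.
Qed.

Lemma dotv_grad_dir k : (1 <= k)%N -> x k.+1 != x k ->
  dotv (gf (x k)) (d k) <= - enorm (d k) ^+ 2.
Proof.
move=> k1 xk; have [gr geps dk _ _] := nonnull_step k k1 xk.
have [dnorm _] := enorm_dir_nonnull k k1 xk.
have [e0 r0 _] := eps_r_bounds k k1.
set G := enorm (g k) in gr dnorm dk *.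
have epsG : eps k < G by apply: lt_trans gr; rewrite ltrDr.
have G0 : 0 < G by apply: lt_trans epsG.
set c := (G - eps k) / G.
have c0 : 0 <= c by rewrite divr_ge0 ?subr_ge0 ?ltW.
have cG : c * G = G - eps k by rewrite /c divfK ?gt_eqF.
have gfg : G ^+ 2 - eps k * G <= dotv (gf (x k)) (g k).
  rewrite -[gf (x k)](subKr (g k)) dotvDl dotvNl -enorm_sqr lerD2l lerN2.
  by apply: le_trans (dotv_le_enorm _ _) _; rewrite ler_pM2r.
rewrite dnorm dk dotvZr mulNr -/c.
have E : c * (G ^+ 2 - eps k * G) = (G - eps k) ^+ 2 by rewrite [RHS]expr2 -{1}cG; ring.
have := ler_wpM2l c0 gfg; lra.
Qed.

Lemma armijo_step k : (1 <= k)%N -> x k.+1 != x k ->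
  exists i : nat, [/\ t k = gamma ^+ i, 0 < t k, 0 < enorm (d k),
    f (x k.+1) <= f (x k) - beta * t k * enorm (d k) ^+ 2 &
    forall i', (i' < i)%N ->
       ~ (f (x k + gamma ^+ i' *: d k)
              <= f (x k) - beta * gamma ^+ i' * enorm (d k) ^+ 2)].
Proof.
move=> k1 xk; have [_ _ _ [i [ti armijo imax]] ->] := nonnull_step k k1 xk.
have [_ rd] := enorm_dir_nonnull k k1 xk.
have [_ r0 _] := eps_r_bounds k k1.
by exists i; split; rewrite // ?ti ?exprn_gt0 //; apply: lt_trans rd.
Qed.

Lemma enorm_step k : (1 <= k)%N -> x k.+1 != x k ->
  enorm (x k.+1 - x k) = t k * enorm (d k).
Proof.
move=> k1 xk; have [_ _ _ _ ->] := nonnull_step k k1 xk.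
have [i [_ t0 _ _ _]] := armijo_step k k1 xk.
by rewrite addrC addKr enormZ ger0_norm // ltW.
Qed.

Lemma f_step_lt k : (1 <= k)%N -> x k.+1 != x k -> f (x k.+1) < f (x k).
Proof.
move=> k1 xk; have [i [_ t0 d0 armijo _]] := armijo_step k k1 xk.
apply: le_lt_trans armijo _; rewrite ltrBlDr ltrDl.
by rewrite mulr_gt0 ?exprn_gt0 // mulr_gt0.
Qed.

Lemma f_nonincreasing k m : (1 <= k)%N -> (k <= m)%N -> f (x m) <= f (x k).
Proof.
move=> k1; move: m; apply: nat_ind_ge => // m km fm; apply: le_trans fm.
have m1 : (1 <= m)%N by apply: leq_trans km.
by have [->|xm] := eqVneq (x m.+1) (x m); last exact/ltW/f_step_lt.
Qed.

Context {xbar : 'rV[R]_n}.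
Hypothesis acc : forall e : R, 0 < e -> forall N : nat, exists k : nat,
      (N <= k)%N /\ (1 <= k)%N /\ enorm (x k - xbar) < e.

Let f_cont_xbar : forall e : R, 0 < e -> exists2 dl : R, 0 < dl &
    forall y, enorm (y - xbar) < dl -> `|f xbar - f y| < e.
Proof. by apply: continuous_enorm; apply/differentiable_continuous/(f_grad xbar).1. Qed.

Lemma fbar_le k : (1 <= k)%N -> f xbar <= f (x k).
Proof.
move=> k1; rewrite leNgt; apply/negP => fk.
have [|dl dl0 fdl] := f_cont_xbar (f xbar - f (x k)); first by rewrite subr_gt0.
have [m [km [_ xm]]] := acc _ dl0 k.
have := fdl _ xm; have := f_nonincreasing k m k1 km; have := ler_norm (f xbar - f (x m)).
lra.
Qed.

Lemma f_cvg_fbar e : 0 < e ->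
  exists N, (1 <= N)%N /\ forall k, (N <= k)%N -> f (x k) - f xbar < e.
Proof.
move=> e0; have [dl dl0 fdl] := f_cont_xbar _ e0.
have [m [_ [m1 xm]]] := acc _ dl0 0.
exists m; split => // k km; have := fdl _ xm; rewrite distrC.
have := f_nonincreasing m k m1 km; have := ler_norm (f (x m) - f xbar); lra.
Qed.

Definition e k := f (x k) - f xbar.

Lemma e_ge0 k : (1 <= k)%N -> 0 <= e k.
Proof. by move=> k1; rewrite subr_ge0 fbar_le. Qed.

Lemma e_gt0 k : (1 <= k)%N -> x k.+1 != x k -> 0 < e k.
Proof.
move=> k1 xk; have := f_step_lt k k1 xk; have := fbar_le k.+1 (leqW k1).
rewrite /e subr_gt0; lra.
Qed.

Lemma e_nonincreasing m p : (1 <= m)%N -> (m <= p)%N -> e p <= e m.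
Proof. by move=> m1 mp; rewrite lerD2r f_nonincreasing. Qed.

Context {dl L : R}.
Hypothesis dl_gt0 : 0 < dl.
Hypothesis L_gt0 : 0 < L.
Hypothesis gf_lipschitz : forall y z, enorm (y - xbar) < dl -> enorm (z - xbar) < dl ->
  enorm (gf y - gf z) <= L * enorm (y - z).

Definition t_min := Num.min 1 (gamma * (1 - beta) / L).

Lemma t_min_gt0 : 0 < t_min.
Proof. by rewrite lt_min ltr01 /= divr_gt0 // mulr_gt0 // subr_gt0. Qed.

(* If the Armijo test failed at s = t k / gamma, the descent lemma forces L s > 1 - beta *)
Lemma t_min_le_step k : (1 <= k)%N -> x k.+1 != x k -> enorm (x k - xbar) < dl / 2 ->
  enorm (x k.+1 - x k) <= gamma * dl / 2 -> t_min <= t k.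
Proof.
move=> k1 xk xkbar stepk.
have [[|i] [ti t0 d0 _ imax]] := armijo_step k k1 xk.
  by rewrite ti expr0 /t_min ge_min lexx.
set s := gamma ^+ i.
have s0 : 0 < s by rewrite exprn_gt0.
have ts : t k = gamma * s by rewrite ti exprS.
have sd : s * enorm (d k) <= dl / 2.
  rewrite (enorm_step k k1 xk) ts in stepk.
  by rewrite -(ler_pM2l gamma_gt0) mulrA; apply: le_trans stepk _; rewrite mulrA.
have desc := descent_lemma f_grad (x k) (d k) s L (ltW s0) (ltW L_gt0).
have : f (x k + s *: d k) <= f (x k) + s * dotv (gf (x k)) (d k) + L * s ^+ 2 * enorm (d k) ^+ 2.
  apply: desc => u /andP [u0 us].
  have ud : enorm (x k + u *: d k - x k) = u * enorm (d k).
    by rewrite addrC addKr enormZ ger0_norm.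
  have dl0 := dl_gt0; rewrite -ud; apply: gf_lipschitz; last lra.
  apply: le_lt_trans (enorm_split _ (x k) _) _; rewrite ud.
  have : u * enorm (d k) <= s * enorm (d k) by rewrite ler_wpM2r ?enorm_ge0.
  lra.
move=> fs; have fail : f (x k) - beta * s * enorm (d k) ^+ 2 < f (x k + s *: d k).
  by rewrite ltNge; apply/negP/imax.
set D := enorm (d k) ^+ 2 in fs fail.
have D0 : 0 < D by rewrite exprn_gt0.
have : s * dotv (gf (x k)) (d k) <= - s * D.
  by rewrite mulNr -mulrN ler_wpM2l ?dotv_grad_dir // ltW.
move=> sdot; have : (1 - beta) * (s * D) < (L * s) * (s * D) by nra.
rewrite ltr_pM2r ?mulr_gt0 // => Ls.
rewrite ts /t_min ge_min; apply/orP; right.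
by rewrite ler_pdivrMr // -mulrA ler_pM2l // mulrC ltW.
Qed.

Context {M q eta : R}.
Hypothesis M_gt0 : 0 < M.
Hypothesis q_gt0 : 0 < q.
Hypothesis q_lt1 : q < 1.
Hypothesis eta_gt0 : 0 < eta.
Hypothesis KL : forall y, enorm (y - xbar) < dl -> f xbar < f y -> f y < f xbar + eta ->
  M * (f y - f xbar) `^ q <= enorm (gf y).

Definition c_Phi := K_grad / (beta * M * (1 - q)).
Definition Phi (s : R) := c_Phi * s `^ (1 - q).

Lemma c_Phi_gt0 : 0 < c_Phi.
Proof.
by rewrite divr_gt0 ?mulr_gt0 ?subr_gt0 //; apply: lt_le_trans K_grad_ge1.
Qed.

Lemma Phi_ge0 a : 0 <= Phi a.
Proof. by rewrite mulr_ge0 ?powR_ge0 // ltW // c_Phi_gt0. Qed.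

Lemma Phi_le a b : 0 <= a -> a <= b -> Phi a <= Phi b.
Proof.
move=> a0 ab; rewrite ler_wpM2l ?(ltW c_Phi_gt0) //.
by apply: ge0_ler_powR; rewrite // ?nnegrE ?subr_ge0 ?(le_trans a0 ab) // ltW.
Qed.

Lemma Phi_small w : 0 < w -> exists2 s, 0 < s & forall a, 0 <= a -> a < s -> Phi a < w.
Proof.
move=> w0; have q1 : 0 < 1 - q by rewrite subr_gt0.
set z := w / c_Phi.
have z0 : 0 < z by rewrite divr_gt0 // c_Phi_gt0.
exists (z `^ (1 - q)^-1); first by rewrite powR_gt0.
move=> a a0 az; rewrite /Phi mulrC -ltr_pdivlMr ?c_Phi_gt0 // -/z.
have : a `^ (1 - q) < (z `^ (1 - q)^-1) `^ (1 - q).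
  by apply: gt0_ltr_powR; rewrite // nnegrE ?powR_ge0.
by rewrite -powRrM mulVf ?gt_eqF // powRr1 ?(ltW z0).
Qed.

(* combines the concavity of Phi, the KL inequality, enorm_grad_le_dir and the Armijo
   decrease; c_Phi is chosen to make the constants match *)
Lemma enorm_step_le_Phi m : (1 <= m)%N -> x m.+1 != x m -> enorm (x m - xbar) < dl ->
  e m < eta -> enorm (x m.+1 - x m) <= Phi (e m) - Phi (e m.+1).
Proof.
move=> m1 xm xmbar em_eta.
have em0 := e_gt0 m m1 xm; have em1 := e_ge0 m.+1 (leqW m1).
have [i [_ t0 d0 armijo _]] := armijo_step m m1 xm.
have gfd := enorm_grad_le_dir m m1 xm.
have KLm : M * e m `^ q <= enorm (gf (x m)).
  by apply: KL => //; rewrite -?ltrBlDl // -subr_gt0.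
have q01 : 0 < 1 - q < 1 by rewrite subr_gt0 q_lt1 ltrBlDl ltrDr q_gt0.
have := powR_concave_tangent q01 em0 em1.
rewrite (_ : 1 - q - 1 = - q) ?powRN; last by ring.
set P := e m `^ q in KLm *; move=> conc.
have P0 : 0 < P by rewrite powR_gt0.
set D := enorm (d m) in gfd armijo d0 *.
have MPD : M * P * (t m * D) <= K_grad * (t m * D) * D.
  have := ler_wpM2r (mulr_ge0 (ltW t0) (ltW d0)) (le_trans KLm gfd); lra.
have tDD : beta * (t m * D) * D <= e m - e m.+1 by rewrite /e; lra.
have tD : t m * D <= K_grad * (e m - e m.+1) / (beta * M * P).
  rewrite ler_pdivlMr ?mulr_gt0 //.
  have := ler_wpM2l (ltW beta_gt0) MPD.
  have := ler_wpM2l (le_trans ler01 K_grad_ge1) tDD.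
  nra.
rewrite enorm_step // /Phi -mulrBr; apply: le_trans tD _.
apply: le_trans (ler_wpM2l (ltW c_Phi_gt0) conc); rewrite le_eqVlt; apply/orP; left.
by apply/eqP; rewrite /c_Phi; field; rewrite !gt_eqF ?subr_gt0.
Qed.

Lemma exists_trapping_start : exists k0, [/\ (1 <= k0)%N, enorm (x k0 - xbar) < dl / 4,
  e k0 < eta & Phi (e k0) < gamma * dl / 4].
Proof.
have [|s s0 Phis] := Phi_small (gamma * dl / 4); first by rewrite divr_gt0 ?mulr_gt0.
have [|N [N1 fN]] := f_cvg_fbar (Num.min eta s); first by rewrite lt_min eta_gt0 s0.
have [|k0 [Nk [k1 xk]]] := acc (dl / 4) _ N; first by rewrite divr_gt0.
have /andP[? ?] : (e k0 < eta) && (e k0 < s) by rewrite -lt_min fN.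
by exists k0; split => //; apply: Phis => //; apply: e_ge0.
Qed.

Context {j : nat -> nat}.
Hypothesis j_incr : forall k, (1 <= k)%N -> (j k < j k.+1)%N.
Hypothesis j_onto : forall m, (1 <= m)%N -> (x m.+1 <> x m <-> exists k, (1 <= k)%N /\ j k = m).
Hypothesis j_nonnull : forall k, (1 <= k)%N -> (1 <= j k)%N /\ x (j k).+1 <> x (j k).
Hypothesis eta_le1 : eta <= 1.


Lemma j_homo k m : (1 <= k)%N -> (k <= m)%N -> (j k <= j m)%N.
Proof.
move=> k1; move: m; apply: nat_ind_ge => // m km jkm.
exact: leq_trans jkm (ltnW (j_incr _ (leq_trans k1 km))).
Qed.

Lemma j_ge k : (1 <= k)%N -> (k <= j k)%N.
Proof.
move: k; apply: nat_ind_ge => [|k k1 kj]; first by case: (j_nonnull _ (leqnn 1)).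
exact: leq_ltn_trans kj (j_incr _ k1).
Qed.

(* j enumerates all nonnull iterations, so none lies strictly between j k and j k.+1 *)
Lemma x_j_succ k : (1 <= k)%N -> x (j k.+1) = x (j k).+1.
Proof.
move=> k1.
suff null_gap i : ((j k).+1 + i <= j k.+1)%N -> x ((j k).+1 + i) = x (j k).+1.
  by rewrite -(subnKC (j_incr _ k1)) null_gap // subnKC // j_incr.
elim: i => [|i IH] ji; first by rewrite addn0.
rewrite addnS -IH; last by apply: ltnW; rewrite -addnS.
set m := ((j k).+1 + i)%N.
apply/eqP; apply: contraT => /eqP xm.
have m1 : (1 <= m)%N by rewrite /m addSn.
have [l [l1 jl]] := (j_onto m m1).1 xm.
have [lk|kl] := leqP l k.
  by have := j_homo l k l1 lk; rewrite jl leqNgt ltnS leq_addr.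
by have := j_homo k.+1 l (leqW k1) kl; rewrite jl leqNgt -addnS ji.
Qed.

Section FromTrappingStart.
Variable k0 : nat.
Hypothesis k0_ge1 : (1 <= k0)%N.
Hypothesis x_k0 : enorm (x k0 - xbar) < dl / 4.
Hypothesis e_k0 : e k0 < eta.
Hypothesis Phi_k0 : Phi (e k0) < gamma * dl / 4.

Lemma ball_of_trapped m : enorm (x m - x k0) + Phi (e m) <= Phi (e k0) ->
  enorm (x m - xbar) < dl / 2.
Proof.
have : gamma * dl <= dl by rewrite ler_piMl // ltW.
have := enorm_split (x m) (x k0) xbar; have := Phi_ge0 (e m).
have := x_k0; have := Phi_k0; have := dl_gt0; lra.
Qed.

Lemma trapped m : (k0 <= m)%N -> enorm (x m - x k0) + Phi (e m) <= Phi (e k0).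
Proof.
move: m; apply: nat_ind_ge => [|m km IH]; first by rewrite subrr enorm0 add0r.
have m1 : (1 <= m)%N by apply: leq_trans km.
have [xm|xm] := eqVneq (x m.+1) (x m); first by rewrite /e xm.
have xmbar : enorm (x m - xbar) < dl.
  by apply: lt_trans (ball_of_trapped m IH) _; have := dl_gt0; lra.
have := enorm_step_le_Phi m m1 xm xmbar (le_lt_trans (e_nonincreasing k0 m k0_ge1 km) e_k0).
have := enorm_split (x m.+1) (x m) (x k0); lra.
Qed.

Lemma trapped_ball m : (k0 <= m)%N -> enorm (x m - xbar) < dl / 2.
Proof. by move=> km; exact: ball_of_trapped m (trapped m km). Qed.

Lemma enorm_step_le_Phi_trapped m : (k0 <= m)%N ->
  enorm (x m.+1 - x m) <= Phi (e m) - Phi (e m.+1).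
Proof.
move=> km; have m1 : (1 <= m)%N by apply: leq_trans km.
have [xm|xm] := eqVneq (x m.+1) (x m); first by rewrite /e xm !subrr enorm0.
apply: enorm_step_le_Phi => //; last exact: le_lt_trans (e_nonincreasing k0 m k0_ge1 km) e_k0.
by apply: lt_trans (trapped_ball m km) _; have := dl_gt0; lra.
Qed.

Lemma enorm_le_Phi_telescope m p : (k0 <= m)%N -> (m <= p)%N ->
  enorm (x p - x m) <= Phi (e m) - Phi (e p).
Proof.
move=> km; move: p; apply: nat_ind_ge => [|p mp IH]; first by rewrite !subrr enorm0.
have := enorm_step_le_Phi_trapped p (leq_trans km mp).
have := enorm_split (x p.+1) (x p) (x m); lra.
Qed.

(* xbar is an accumulation point, so the telescoped bound passes to the limit *)
Lemma dist_xbar_le_Phi m : (k0 <= m)%N -> enorm (x m - xbar) <= Phi (e m).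
Proof.
move=> km; apply/ler_addgt0Pr => e0 e0_gt0.
have [p [mp [_ xp]]] := acc _ e0_gt0 m.
have := enorm_le_Phi_telescope m p km mp; have := Phi_ge0 (e p).
have := enorm_split (x m) (x p) xbar; rewrite [enorm (x m - x p)]enorm_distC; lra.
Qed.

Definition c_dec := beta * t_min * (M / K_grad) ^+ 2.

Lemma c_dec_gt0 : 0 < c_dec.
Proof.
rewrite mulr_gt0 ?exprn_gt0 ?divr_gt0 ?mulr_gt0 ?t_min_gt0 //.
exact: lt_le_trans K_grad_ge1.
Qed.

Lemma sufficient_decrease m : (k0 <= m)%N -> x m.+1 != x m ->
  c_dec * e m `^ (2 * q) <= e m - e m.+1.
Proof.
move=> km xm; have m1 : (1 <= m)%N by apply: leq_trans km.
have xmbar := trapped_ball m km.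
have tm : t_min <= t m.
  apply: t_min_le_step => //; apply: le_trans (enorm_step_le_Phi_trapped m km) _.
  have := Phi_ge0 (e m.+1); have := Phi_le _ _ (e_ge0 m m1) (e_nonincreasing k0 m k0_ge1 km).
  have : 0 < gamma * dl by rewrite mulr_gt0.
  have := Phi_k0; lra.
have [i [_ t0 d0 armijo _]] := armijo_step m m1 xm.
have gfd := enorm_grad_le_dir m m1 xm.
have KLm : M * e m `^ q <= enorm (gf (x m)).
  apply: KL; last by rewrite -ltrBlDl; exact: le_lt_trans (e_nonincreasing k0 m k0_ge1 km) e_k0.
    by apply: lt_trans xmbar _; have := dl_gt0; lra.
  by rewrite -subr_gt0; exact: e_gt0.
rewrite [2 * q]mulrC powRrM powR_mulrn ?powR_ge0 //.
set P := e m `^ q in KLm *; set D := enorm (d m) in armijo gfd d0 *.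
have K0 : 0 < K_grad by apply: lt_le_trans K_grad_ge1.
have PD : M / K_grad * P <= D.
  by rewrite mulrAC ler_pdivrMr // [D * _]mulrC; apply: le_trans KLm gfd.
have PD2 : (M / K_grad * P) ^+ 2 <= D ^+ 2.
  by rewrite ler_pXn2r // nnegrE ?(ltW d0) // mulr_ge0 ?divr_ge0 ?powR_ge0 // ltW.
have : beta * t_min * D ^+ 2 <= beta * t m * D ^+ 2.
  by rewrite ler_wpM2r ?sqr_ge0 // ler_wpM2l // ltW.
have : c_dec * P ^+ 2 <= beta * t_min * D ^+ 2.
  by rewrite /c_dec -mulrA ler_wpM2l ?mulr_ge0 ?(ltW t_min_gt0) ?(ltW beta_gt0) // -exprMn.
rewrite /e; lra.
Qed.

Definition e_sub k := e (j k).

Lemma KL_recursion_e_sub : KL_recursion e_sub c_dec q k0.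
Proof.
move=> k kk0; have k1 : (1 <= k)%N by apply: leq_trans kk0.
have jk : (k0 <= j k)%N by apply: leq_trans kk0 (j_ge k k1).
have [jk1 /eqP xjk] := j_nonnull _ k1.
split; first exact: e_gt0.
  by apply: le_lt_trans (e_nonincreasing k0 (j k) k0_ge1 jk) _; apply: lt_le_trans e_k0 _.
have := sufficient_decrease (j k) jk xjk; rewrite /e_sub /e x_j_succ //; lra.
Qed.

Lemma dist_sub_le_Phi k : (k0 <= k)%N -> enorm (x (j k) - xbar) <= Phi (e_sub k).
Proof.
move=> kk0; apply: dist_xbar_le_Phi.
exact: leq_trans kk0 (j_ge k (leq_trans k0_ge1 kk0)).
Qed.

End FromTrappingStart.

Lemma convergence_rates :
  (q <= 1/2 ->
     exists C lam : R, 0 < C /\ 0 < lam < 1 /\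
       \forall k \near \oo, enorm (x (j k) - xbar) <= C * lam ^+ k)
  /\
  (1/2 < q ->
     exists vr : R, 0 < vr /\
       \forall k \near \oo,
         enorm (x (j k) - xbar) <= vr * (k%:R) `^ (- ((1 - q) / (2 * q - 1)))).
Proof.
have [k0 [k0_ge1 x_k0 e_k0 Phi_k0]] := exists_trapping_start.
have rec : KL_recursion e_sub c_dec q k0 by exact: KL_recursion_e_sub.
have dist k : (k0 <= k)%N -> enorm (x (j k) - xbar) <= Phi (e_sub k).
  exact: dist_sub_le_Phi.
split => qh.
- have [C [lam [C0 [lam01 rate]]]] := KL_recursion_linear c_dec_gt0 q_gt0 qh rec.
  exists (c_Phi * C), lam; split; first by rewrite mulr_gt0 ?c_Phi_gt0.
  split => //; exists k0 => // k /= kk0; apply: le_trans (dist k kk0) _.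
  by rewrite /Phi -mulrA ler_wpM2l ?(ltW c_Phi_gt0) ?rate.
- have [vr [vr0 [N rate]]] := KL_recursion_sublinear c_dec_gt0 qh q_lt1 rec.
  exists (c_Phi * vr); split; first by rewrite mulr_gt0 ?c_Phi_gt0.
  exists (maxn k0 N) => // k /=; rewrite geq_max => /andP[kk0 kN].
  apply: le_trans (dist k kk0) _.
  by rewrite /Phi -mulrA ler_wpM2l ?(ltW c_Phi_gt0) ?rate.
Qed.

End IRGBacktracking.

Lemma KL_lipschitz_on_ball {R : realType} {n : nat} {f : 'rV[R]_n -> R}
  {gf : 'rV[R]_n -> 'rV[R]_n} {xbar : 'rV[R]_n} {M q : R} :
  (exists eta : R, 0 < eta /\ exists U : set 'rV[R]_n, nbhs xbar U /\
     forall y, U y -> f xbar < f y -> f y < f xbar + eta ->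
       M * (f y - f xbar) `^ q <= enorm (gf y)) ->
  (exists U : set 'rV[R]_n, nbhs xbar U /\ exists L : R,
     forall y z, U y -> U z -> enorm (gf y - gf z) <= L * enorm (y - z)) ->
  exists dl L eta : R, [/\ 0 < dl, 0 < L, 0 < eta <= 1,
    forall y z, enorm (y - xbar) < dl -> enorm (z - xbar) < dl ->
      enorm (gf y - gf z) <= L * enorm (y - z) &
    forall y, enorm (y - xbar) < dl -> f xbar < f y -> f y < f xbar + eta ->
      M * (f y - f xbar) `^ q <= enorm (gf y)].
Proof.
move=> [eta [eta0 [U [/nbhs_enorm[d1 d1_gt0 d1U] KLU]]]].
move=> [V [/nbhs_enorm[d2 d2_gt0 d2V] [L LipV]]].
exists (Num.min d1 d2), (Num.max L 1), (Num.min eta 1).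
split; rewrite ?lt_min ?d1_gt0 ?ge_min ?lt_max ?ltr01 ?eta0 ?lexx ?orbT //.
- move=> y z; rewrite !lt_min => /andP[_ /d2V Vy] /andP[_ /d2V Vz].
  by apply: le_trans (LipV y z Vy Vz) _; rewrite ler_wpM2r ?enorm_ge0 ?le_max ?lexx.
- move=> y; rewrite lt_min => /andP[/d1U Uy _] fy fye; apply: KLU => //.
  by apply: lt_le_trans fye _; rewrite lerD2l ge_min lexx.
Qed.

Theorem mainTheorem16 (R : realType) (n : nat)
  (f : 'rV[R]_n -> R) (gf : 'rV[R]_n -> 'rV[R]_n)
  (mu theta beta gamma tau : R) (rho : nat -> R)
  (x g d : nat -> 'rV[R]_n) (eps r t : nat -> R)
  (xbar : 'rV[R]_n) (M q : R) (j : nat -> nat) :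
  C1_with_gradient f gf ->
  IRG_backtracking f gf mu theta beta gamma tau rho x g d eps r t ->
  theta < mu ->
  rho k @[k --> \oo] --> (0 : R) ->
  (* xbar is an accumulation point of (x^k)_{k >= 1} *)
  (forall e : R, 0 < e -> forall N : nat, exists k : nat,
      (N <= k)%N /\ (1 <= k)%N /\ enorm (x k - xbar) < e) ->
  (* KL property at xbar with psi(t) = M t^q *)
  0 < M -> 0 < q < 1 ->
  (exists eta : R, 0 < eta /\ exists U : set 'rV[R]_n, nbhs xbar U /\
     forall y, U y -> f xbar < f y -> f y < f xbar + eta ->
       M * (f y - f xbar) `^ q <= enorm (gf y)) ->
  (* gradient Lipschitz continuous on a neighborhood of xbar *)
  (exists U : set 'rV[R]_n, nbhs xbar U /\ exists L : R,
     forall y z, U y -> U z -> enorm (gf y - gf z) <= L * enorm (y - z)) ->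
  (* j_1 < j_2 < ... enumerates the non-null iterations {k >= 1 : x^{k+1} <> x^k} *)
  (forall k, (1 <= k)%N -> (j k < j k.+1)%N) ->
  (forall m, (1 <= m)%N -> (x m.+1 <> x m <-> exists k, (1 <= k)%N /\ j k = m)) ->
  (forall k, (1 <= k)%N -> (1 <= j k)%N /\ x (j k).+1 <> x (j k)) ->
  (q <= 1/2 ->
     exists C lam : R, 0 < C /\ 0 < lam < 1 /\
       \forall k \near \oo, enorm (x (j k) - xbar) <= C * lam ^+ k)
  /\
  (1/2 < q ->
     exists vr : R, 0 < vr /\
       \forall k \near \oo,
         enorm (x (j k) - xbar) <= vr * (k%:R) `^ (- ((1 - q) / (2 * q - 1)))).
Proof.
(* the rates do not need rho k --> 0 *)
move=> [f_grad _] irg theta_lt_mu _ acc M_gt0 /andP[q_gt0 q_lt1] KL Lip.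
move=> j_incr j_onto j_nonnull.
have [dl [L [eta [dl_gt0 L_gt0 /andP[eta_gt0 eta_le1] Lip_dl KL_dl]]]] :=
  KL_lipschitz_on_ball KL Lip.
exact: (convergence_rates f_grad irg theta_lt_mu acc dl_gt0 L_gt0 Lip_dl M_gt0 q_gt0
  q_lt1 eta_gt0 KL_dl j_incr j_onto j_nonnull eta_le1).
Qed.
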